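(* Let $X$ be a topological space, $Y$ a completely regular space, $G$ an infinite open subset of $Y$, $g,h:X\to\mathbb R$ continuous functions with $g\le0\le h$, and $A$ a functionally closed subset of $X$. Then there exists a separately continuous function $f:X\times Y\to\mathbb R$ such that $\operatorname{supp}f\subseteq(X\setminus A)\times G$ and, for every $x\in X\setminus A$, $\min_{y\in G}f(x,y)=g(x)$ and $\max_{y\in G}f(x,y)=h(x)$ (the minimum and maximum being attained).
   Context: Completely regular spaces are assumed $T_1$. $A\subseteq X$ is functionally closed if $A=\alpha^{-1}(0)$ for some continuous $\alpha:X\to[0,1]$. $\operatorname{supp}f=\{(x,y):f(x,y)\ne0\}$. $f$ is separately continuous if it is continuous in each variable when the other is fixed. *)

From HB Require Import structures.
From mathcomp Require Import all_boot all_order all_algebra.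
From mathcomp Require Import all_classical all_reals all_analysis.
Set Implicit Arguments. Unset Strict Implicit. Unset Printing Implicit Defensive.
Import Order.TTheory GRing.Theory Num.Theory.
Import numFieldNormedType.Exports.
Local Open Scope classical_set_scope.
Local Open Scope ring_scope.

(* Completely regular (Tychonoff) space: points and closed sets are separated
   by continuous functions into [0,1]; plus the T1 axiom (accessible_space). *)
Definition completely_regular (R : realType) (T : topologicalType) : Prop :=
  accessible_space T /\
  forall (a : T) (B : set T), closed B -> ~ B a ->
    exists phi : T -> R, continuous phi /\ (forall t, 0 <= phi t <= 1) /\
      phi a = 0 /\ (forall b, B b -> phi b = 1).

Definition functionally_closed (R : realType) (T : topologicalType) (A : set T) : Prop :=
  exists alpha : T -> R, continuous alpha /\ (forall t, 0 <= alpha t <= 1) /\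
    A = alpha @^-1` [set 0].

Definition separately_continuous (R : realType) (X Y : topologicalType)
  (f : X * Y -> R) : Prop :=
  (forall x : X, continuous (fun y : Y => f (x, y))) /\
  (forall y : Y, continuous (fun x : X => f (x, y))).

Definition supp (R : realType) (T : Type) (f : T -> R) : set T := [set p | f p != 0].

(* Complete regularity splits an infinite open set W into a point p and an
   infinite open W' whose closure misses p; a bump at p supported in W \ W',
   followed by recursion on W', yields continuous bumps b_k : Y -> [0,1] with
   pairwise disjoint supports in G and peaks b_k (p_k) = 1.  Take continuous
   tent_n : R -> [0,1] vanishing at 0, with finitely many tent_n t nonzero for
   each t and tent_n t = 1 for some n whenever 0 < t <= 1.  With
   c_{2n} = h * (tent_n o alpha) and c_{2n+1} = g * (tent_n o alpha), set
   f (x, y) = sum_k c_k x * b_k y.  For fixed y at most one b_k y is nonzero,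
   and for fixed x only finitely many c_k x are, so f is separately
   continuous; h x and g x are attained at the peaks. *)

From HB Require Import structures.
From mathcomp Require Import all_boot all_order all_algebra.
From mathcomp Require Import all_classical all_reals all_analysis.
From mathcomp Require Import lra.
Import Order.TTheory GRing.Theory Num.Theory.
Import numFieldNormedType.Exports.
Local Open Scope classical_set_scope.
Local Open Scope ring_scope.

Section tent.
Context {R : realType}.

Definition clamp01 (x : R) : R := Num.max 0 (Num.min 1 x).

Lemma clamp01_itv x : 0 <= clamp01 x <= 1.
Proof. by rewrite /clamp01 le_max lexx ge_max ler01 ge_min lexx. Qed.

Lemma clamp01_le0 x : x <= 0 -> clamp01 x = 0.
Proof. by move=> x_le0; rewrite /clamp01 min_r ?max_l // (le_trans x_le0). Qed.

Lemma clamp01_ge1 x : 1 <= x -> clamp01 x = 1.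
Proof. by move=> x_ge1; rewrite /clamp01 min_l // max_r. Qed.

(* [tent n] is [1] on [[1/(n+2), 1/(n+1)]] and [0] outside []1/(n+3), 1/n[]
   (for [n = 0], outside []1/3, +oo[]). *)
Definition tent (n : nat) (t : R) : R :=
  clamp01 (Num.min ((n%:R + 2) * (n%:R + 3) * t - (n%:R + 2))
                   ((n%:R + 1) - n%:R * (n%:R + 1) * t)).

Lemma tent_itv n t : 0 <= tent n t <= 1.
Proof. exact: clamp01_itv. Qed.

Lemma tent_le0 n t : t <= 0 -> tent n t = 0.
Proof.
move=> t_le0; have n_ge0 : 0 <= n%:R :> R by [].
by rewrite /tent clamp01_le0 // ge_min; apply/orP; left; nra.
Qed.

Lemma tent_eventually0 t : exists N, forall n, (N <= n)%N -> tent n t = 0.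
Proof.
have [t_le0|t_gt0] := leP t 0; first by exists 0%N => n _; exact: tent_le0.
exists (Num.truncn t^-1).+1 => n le_Nn.
have inv_gt0 : 0 < t^-1 by rewrite invr_gt0.
have /andP[_ lt_inv] := truncn_itv (ltW inv_gt0).
have nt_gt1 : 1 < n%:R * t.
  by rewrite -ltr_pdivrMr // div1r (lt_le_trans lt_inv) // ler_nat.
have n_ge0 : 0 <= n%:R :> R by [].
by rewrite /tent clamp01_le0 // ge_min; apply/orP; right; nra.
Qed.

Lemma tent_eq1 {t : R} : 0 < t -> t <= 1 -> exists n, tent n t = 1.
Proof.
move=> t_gt0 t_le1.
have inv_ge1 : 1 <= t^-1 by rewrite invr_ge1 // unitfE gt_eqF.
have /andP[] := truncn_itv (le_trans ler01 inv_ge1).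
case: (Num.truncn t^-1) => [|n] le_n lt_n; first by move: lt_n; rewrite ltNge inv_ge1.
exists n; rewrite -!natr1 in le_n lt_n.
have n1t_le1 : (n%:R + 1) * t <= 1 by rewrite -ler_pdivlMr // div1r.
have n2t_gt1 : 1 < (n%:R + 1 + 1) * t by rewrite -ltr_pdivrMr // div1r.
have n_ge0 : 0 <= n%:R :> R by [].
by rewrite /tent clamp01_ge1 // le_min; apply/andP; split; nra.
Qed.

Lemma continuous_clamp01 (T : topologicalType) (f : T -> R) :
  continuous f -> continuous (fun x => clamp01 (f x)).
Proof.
move=> f_cont x; have cst_cont (c : R) : {for x, continuous (fun _ : T => c)}.
  exact: cst_continuous.
exact: (continuous_max (cst_cont 0) (continuous_min (cst_cont 1) (f_cont x))).
Qed.

Lemma continuous_tent n : continuous (tent n).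
Proof.
have scale_cont (a t : R) : {for t, continuous ( *%R a)}.
  by apply: continuousM; [exact: cst_continuous | exact: cvg_id].
have rise_cont (a b t : R) : {for t, continuous (fun s => a * s - b)}.
  by apply: continuousB; [exact: scale_cont | exact: cst_continuous].
have fall_cont (a b t : R) : {for t, continuous (fun s => b - a * s)}.
  by apply: continuousB; [exact: cst_continuous | exact: scale_cont].
apply: continuous_clamp01 => t.
exact: (continuous_min (rise_cont _ _ t) (fall_cont _ _ t)).
Qed.

End tent.

Section coefficients.
Context {R : realType} {X : topologicalType}.
Variables (g h alpha : X -> R).

Definition coef (k : nat) (x : X) : R :=
  (if odd k then g x else h x) * tent k./2 (alpha x).

Lemma continuous_coef k :
  continuous g -> continuous h -> continuous alpha -> continuous (coef k).
Proof.
move=> g_cont h_cont a_cont x; rewrite /coef.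
have tent_cont : {for x, continuous (fun x => tent k./2 (alpha x))}.
  exact: continuous_comp (a_cont x) (continuous_tent _ _).
by case: (odd k);
  [exact: continuousM (g_cont x) tent_cont | exact: continuousM (h_cont x) tent_cont].
Qed.

Lemma coef_eventually0 x : exists N, forall k, (N <= k)%N -> coef k x = 0.
Proof.
have [N tent0] := tent_eventually0 (alpha x); exists N.*2 => k le_Nk.
by rewrite /coef tent0 ?mulr0 // -(doubleK N) half_leq.
Qed.

Lemma coef_le0 k x : alpha x <= 0 -> coef k x = 0.
Proof. by move=> a_le0; rewrite /coef tent_le0 ?mulr0. Qed.

Lemma coef_attains {x} : 0 < alpha x -> alpha x <= 1 ->
  exists n, coef n.*2 x = h x /\ coef n.*2.+1 x = g x.
Proof.
move=> a_gt0 a_le1; have [n tent1] := tent_eq1 a_gt0 a_le1.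
by exists n; rewrite /coef /= odd_double uphalf_double doubleK tent1 !mulr1.
Qed.

Hypotheses (g_le0 : forall x, g x <= 0) (h_ge0 : forall x, 0 <= h x).

Lemma coef_mul_bounds k x s : 0 <= s <= 1 -> g x <= coef k x * s <= h x.
Proof.
move=> /andP[s_ge0 s_le1]; have /andP[t_ge0 t_le1] := tent_itv k./2 (alpha x).
have ts_ge0 : 0 <= tent k./2 (alpha x) * s by rewrite mulr_ge0.
have ts_le1 : tent k./2 (alpha x) * s <= 1 by rewrite mulr_ile1.
have := g_le0 x; have := h_ge0 x.
by rewrite /coef -mulrA; case: (odd k) => h_x g_x; apply/andP; split; nra.
Qed.

End coefficients.

Section glue.
Context {R : realType} {X Y : topologicalType}.
Variables (c : nat -> X -> R) (b : nat -> Y -> R).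
Hypothesis b_disj : trivIset setT (fun n => supp (b n)).

(* Defaults to [0] when [y] lies in no support; then [b 0 y = 0] as well. *)
Definition active (y : Y) : nat := xget 0%N [set n | b n y != 0].

Lemma active_eq {n y} : b n y != 0 -> active y = n.
Proof.
by move=> bny; apply: xget_unique => // m bmy; apply: b_disj => //; exists y.
Qed.

Lemma disjoint_supp_eq0 {m y} : b m y != 0 -> forall n, m != n -> b n y = 0.
Proof.
move=> bmy n mn; apply/eqP; apply: contraNT mn => /active_eq <-.
by rewrite (active_eq bmy).
Qed.

Definition glue (p : X * Y) : R := c (active p.2) p.1 * b (active p.2) p.2.

Lemma glueE {n} x {y} : b n y != 0 -> glue (x, y) = c n x * b n y.
Proof. by move=> bny; rewrite /glue /= (active_eq bny). Qed.

Lemma glue_peak {n} x {y} : b n y = 1 -> glue (x, y) = c n x.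
Proof.
move=> bny; have bny_neq0 : b n y != 0 by rewrite bny oner_neq0.
by rewrite (glueE x bny_neq0) bny mulr1.
Qed.

Lemma glue_sum N x y : (forall n, (N <= n)%N -> c n x = 0) ->
  glue (x, y) = \sum_(n < N) c n x * b n y.
Proof.
move=> c_eq0.
have [[m bmy]|b_eq0] := pselect (exists m, b m y != 0); last first.
  have {}b_eq0 n : b n y = 0 by apply/eqP; apply: contra_notT b_eq0; exists n.
  by rewrite /glue b_eq0 mulr0 big1 // => n _; rewrite b_eq0 mulr0.
rewrite (glueE x bmy); have [m_lt|N_le] := ltnP m N.
  rewrite (bigD1 (Ordinal m_lt)) //= big1 ?addr0 // => n nm.
  by rewrite (disjoint_supp_eq0 bmy) ?mulr0 // eq_sym.
rewrite c_eq0 // mul0r big1 // => n _.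
by rewrite (disjoint_supp_eq0 bmy) ?mulr0 // gtn_eqF // (leq_trans (ltn_ord n)).
Qed.

Lemma glue_separately_continuous :
  (forall n, continuous (c n)) -> (forall n, continuous (b n)) ->
  (forall x, exists N, forall n, (N <= n)%N -> c n x = 0) ->
  separately_continuous glue.
Proof.
move=> c_cont b_cont c_fin; split=> [x|y].
  have [N c_eq0] := c_fin x.
  have -> : (fun y => glue (x, y)) = (fun y => \sum_(n < N) c n x * b n y).
    by apply: funext => y; exact: glue_sum.
  apply: (continuous_big add_continuous) => n _ y.
  by apply: continuousM; [exact: cst_continuous | exact: b_cont].
by move=> x; apply: continuousM; [exact: c_cont | exact: cst_continuous].
Qed.

End glue.

Lemma trivIset_layers {T : Type} (W F : nat -> set T) :
  (forall n, W n.+1 `<=` W n) -> (forall n, F n `<=` W n `\` W n.+1) ->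
  trivIset setT F.
Proof.
move=> W_dec F_sub; apply: ltn_trivIset => n m lt_mn.
have W_anti k l : (k <= l)%N -> W l `<=` W k.
  by move=> /subnK <-; elim: (l - k)%N => // d IH y /W_dec /IH.
apply/seteqP; split => // y [/F_sub[_ nWm1] /F_sub[Wn _]].
by apply: nWm1; exact: W_anti lt_mn _ Wn.
Qed.

Section bumps.
Context {R : realType} {Y : topologicalType}.

Lemma closure_sublevel_lt {psi : Y -> R} r :
  continuous psi -> closure [set y | psi y < r] `<=` [set y | psi y <= r].
Proof.
move=> psi_cont; rewrite [X in _ `<=` X](closure_id _).1.
  by apply: closureS => y /ltW.
apply: (@preimage_closed _ _ psi [set x | x <= r]); last exact: closed_le.
by move=> y _; exact: psi_cont.
Qed.

Definition is_bump (W : set Y) (p : Y) (b : Y -> R) : Prop :=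
  [/\ continuous b, forall y, 0 <= b y <= 1, b p = 1 & supp b `<=` W].

Lemma shrink_sublevel {W : set Y} {psi : Y -> R} {r p} :
  open W -> continuous psi -> r < psi p ->
  infinite_set (W `&` [set y | psi y < r]) ->
  exists W', [/\ open W', infinite_set W', W' `<=` W & ~ closure W' p].
Proof.
move=> oW psi_cont r_lt inf; exists (W `&` [set y | psi y < r]); split => //.
- apply: openI oW _; apply: (@open_comp _ _ psi [set x | x < r]).
    by move=> y _; exact: psi_cont.
  exact: open_lt.
- move=> /(closureS (@subIsetr _ W _)) /(closure_sublevel_lt r psi_cont) /=.
  by rewrite leNgt r_lt.
Qed.

Hypothesis Ycr : completely_regular R Y.

Lemma bump_off_closed {B : set Y} {p} : closed B -> ~ B p ->
  exists b, is_bump (~` B) p b.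
Proof.
move=> cB Bp; have [_ /(_ p B cB Bp)[phi [phi_cont [phi01 [phi_p phi_B]]]]] := Ycr.
exists (fun y => 1 - phi y); split.
- by move=> y; apply: continuousB; [exact: cst_continuous | exact: phi_cont].
- by move=> y; have /andP[? ?] := phi01 y; apply/andP; split; lra.
- by rewrite phi_p subr0.
- by move=> y /[swap] By; rewrite /supp /= phi_B // subrr eqxx.
Qed.

Lemma infinite_open_shrink {W : set Y} : open W -> infinite_set W ->
  exists W' p, [/\ open W', infinite_set W', W' `<=` W, W p & ~ closure W' p].
Proof.
move=> oW iW; have [a Wa] := infinite_setN0 iW.
have [a' [Wa' a'_neq_a]] := infinite_setN0 (infinite_setD iW (finite_set1 a)).
have [Yt1 /(_ a' [set a] (accessible_closed_set1 Yt1 (x := a)) a'_neq_a)] := Ycr.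
move=> [phi [phi_cont [phi01 [phi_a' phi_a]]]].
have [lo_inf|lo_fin] := pselect (infinite_set (W `&` [set y | phi y < 2/3])).
  have [|W' [? ? ? ?]] := shrink_sublevel (p := a) oW phi_cont _ lo_inf.
    by rewrite phi_a //; lra.
  by exists W', a.
(* The sublevel sets [phi < 2/3] and [1 - phi < 2/3] cover [W]. *)
have hi_inf : infinite_set (W `&` [set y | 1 - phi y < 2/3]).
  apply: contra_not iW => hi_fin; apply: (@sub_finite_set _ _
    ((W `&` [set y | phi y < 2/3]) `|` (W `&` [set y | 1 - phi y < 2/3]))).
    by move=> y Wy; have [lt|ge] := ltP (phi y) (2/3); [left|right; split => //=; lra].
  by rewrite finite_setU; split => //; exact: contrapT.
have co_phi_cont : continuous (fun y => 1 - phi y).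
  by move=> y; apply: continuousB; [exact: cst_continuous | exact: phi_cont].
have [|W' [? ? ? ?]] := shrink_sublevel (p := a') oW co_phi_cont _ hi_inf.
  by rewrite /= phi_a' subr0; lra.
by exists W', a'.
Qed.

Lemma bump_step {W : set Y} : open W -> infinite_set W ->
  exists W' p b, [/\ open W', infinite_set W', W' `<=` W & is_bump (W `\` W') p b].
Proof.
move=> oW iW; have [W' [p [oW' iW' W'W Wp clW'p]]] := infinite_open_shrink oW iW.
have clB : closed (~` W `|` closure W').
  exact: closedU (open_closedC oW) (@closed_closure _ W').
have Bp : ~ (~` W `|` closure W') p by case.
have [b [b_cont b01 bp b_supp]] := bump_off_closed clB Bp.
exists W', p, b; split => //; split => // y /b_supp /not_orP[/contrapT Wy clW'y].
by split => // W'y; apply: clW'y; exact: subset_closure.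
Qed.

Lemma disjoint_bumps {G : set Y} : open G -> infinite_set G ->
  exists (b : nat -> Y -> R) (p : nat -> Y),
    (forall n, is_bump G (p n) (b n)) /\ trivIset setT (fun n => supp (b n)).
Proof.
move=> oG iG; pose S := {W : set Y | open W /\ infinite_set W}.
have step (V : S) : exists q : S * Y * (Y -> R),
    sval q.1.1 `<=` sval V /\ is_bump (sval V `\` sval q.1.1) q.1.2 q.2.
  case: V => V [oV iV]; have [V' [p [b [oV' iV' V'V bb]]]] := bump_step oV iV.
  by exists (exist _ V' (conj oV' iV'), p, b).
have [next nextP] := choice step.
pose W n := iter n (fun V => (next V).1.1) (exist _ G (conj oG iG)).
have W_dec n : sval (W n.+1) `<=` sval (W n) by exact: (nextP (W n)).1.
have layers : trivIset setT (fun n => supp (next (W n)).2).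
  apply: (trivIset_layers (fun n => sval (W n))) => // n.
  by case: (nextP (W n)) => _ [].
exists (fun n => (next (W n)).2), (fun n => (next (W n)).1.2); split => // n.
have [b_cont b01 bp b_supp] := (nextP (W n)).2; split => // y /b_supp[+ _].
by elim: n {b_cont b01 bp b_supp} y => // n IH y /W_dec /IH.
Qed.

End bumps.

Theorem lemma7p1 (R : realType) (X Y : topologicalType)
  (G : set Y) (g h : X -> R) (A : set X) :
  completely_regular R Y ->
  open G -> infinite_set G ->
  continuous g -> continuous h ->
  (forall x, g x <= 0) -> (forall x, 0 <= h x) ->
  functionally_closed R A ->
  exists f : X * Y -> R,
    separately_continuous f /\
    supp f `<=` (~` A) `*` G /\
    (forall x, ~ A x ->
       (forall y, G y -> g x <= f (x, y) <= h x) /\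
       (exists2 y, G y & f (x, y) = g x) /\
       (exists2 y, G y & f (x, y) = h x)).
Proof.
move=> Ycr oG iG g_cont h_cont g_le0 h_ge0 [alpha [a_cont [a01 ->]]].
have [b [p [b_bump b_disj]]] := disjoint_bumps Ycr oG iG.
exists (glue (coef g h alpha) b); split; [|split].
- apply: glue_separately_continuous => // [n|n|x].
  + exact: continuous_coef.
  + by case: (b_bump n).
  + exact: coef_eventually0.
- move=> [x y]; rewrite /supp /glue /= mulf_eq0 negb_or => /andP[cx_neq0 by_neq0].
  split; last by case: (b_bump (active b y)) => _ _ _; apply.
  by move=> a_eq0; move: cx_neq0; rewrite coef_le0 ?a_eq0 ?eqxx.
- move=> x /= a_neq0; have /andP[a_ge0 a_le1] := a01 x.
  have a_gt0 : 0 < alpha x by rewrite lt_neqAle eq_sym a_ge0 andbT; apply/eqP.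
  have G_peak k : G (p k).
    by have [_ _ bp] := b_bump k; apply; rewrite /supp /= bp oner_neq0.
  have glue_p k : glue (coef g h alpha) b (x, p k) = coef g h alpha k x.
    by apply: (glue_peak _ _ b_disj); case: (b_bump k).
  have [n [cn_h cn1_g]] := coef_attains g h alpha a_gt0 a_le1.
  split; last by split; [exists (p n.*2.+1) | exists (p n.*2)]; rewrite ?glue_p.
  by move=> y _; apply: coef_mul_bounds => //; case: (b_bump (active b y)).
Qed.
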